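(* Let $\mathbb X$ be a Euclidean space, $g\colon\mathbb X\to\mathbb R^m$ twice continuously differentiable, $D\subset\mathbb R^m$ convex and polyhedral, $\Phi(x):=g(x)-D$, $(\bar x,0)\in\operatorname{gph}\Phi$, and $u\in\mathbb S_{\mathbb X}$ with $\nabla g(\bar x)u\in\mathcal T_D(g(\bar x))$. For $y^*,z^*\in\mathbb R^m$ let $\mathrm{C}(u,y^*,z^* )$ denote the conditions $\nabla g(\bar x)^*y^*=0$, $\nabla^2\langle y^*,g\rangle(\bar x)(u)+\nabla g(\bar x)^*z^*=0$, $y^*,z^*\in\mathcal N_D(g(\bar x))$. Then: (i) The 2-regularity condition $\operatorname{Im}\nabla g(\bar x)+\nabla^2g(\bar x)[u,\nabla g(\bar x)^{-1}\mathcal T_D(g(\bar x))]-\mathcal T_D(g(\bar x))=\mathbb R^m$ holds if and only if: for all $y^*,z^*$, $\mathrm{C}(u,y^*,z^* )$ implies $y^*=0$. (ii) The condition ''for all $y^*,z^*$: $\nabla g(\bar x)^*y^*=0$, $\nabla^2\langle y^*,g\rangle(\bar x)(u)+\nabla g(\bar x)^*z^*=0$, $y^*\in\mathcal N_{\mathcal T_D(g(\bar x))}(\nabla g(\bar x)u)$ and $z^*\in\mathcal N_{\mathcal T_D(g(\bar x))}(\nabla g(\bar x)u)$ (respectively, in the second variant, $z^*\in\mathcal T_{\mathcal N_{\mathcal T_D(g(\bar x))}(\nabla g(\bar x)u)}(y^* )$) imply $y^*=0$'' is (in either variant) equivalent to: for all $y^*,z^*$, $\mathrm{C}(u,y^*,z^*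 )$ together with $\langle z^*,\nabla g(\bar x)u\rangle=0$ implies $y^*=0$. (iii) Gfrerer's condition ''for all $y^*,z^*$: $\mathrm C(u,y^*,z^* )$ and $y^*\in\operatorname{argmax}\{\tfrac12\nabla^2\langle\hat y^*,g\rangle(\bar x)[u,u]\mid \hat y^*\in\mathcal N_D(g(\bar x))\cap\ker\nabla g(\bar x)^*\}$ imply $y^*=0$'', and the condition ''for each $s\in\mathbb X$ and all $y^*,z^*$: $\nabla g(\bar x)^*y^*=0$, $\nabla^2\langle y^*,g\rangle(\bar x)(u)+\nabla g(\bar x)^*z^*=0$, $y^*\in\mathcal N_{\mathbf T(u)}(w_s(u,0))$ and $z^*\in\mathcal N_{\mathbf T(u)}(w_s(u,0))$ (respectively, in the second variant, $z^*\in\mathcal T_{\mathcal N_{\mathbf T(u)}(w_s(u,0))}(y^* )$) imply $y^*=0$'' are both (the latter in either variant) equivalent to: for all $y^*,z^*\in\mathbb R^m$ and $s\in\mathbb X$, $\mathrm C(u,y^*,z^* )$ together with $w_s(u,0)\in\mathbf T(u)$ implies $y^*=0$.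
   Context: $\mathbb S_{\mathbb X}$ is the unit sphere; $\mathcal T_Q$ and $\mathcal N_Q$ are the tangent and (limiting, here convex-analysis) normal cones. $\nabla g(\bar x)$ is the derivative, $\nabla g(\bar x)^*$ its adjoint, $\nabla g(\bar x)^{-1}A:=\{s\mid\nabla g(\bar x)s\in A\}$; $\nabla^2\langle y^*,g\rangle(\bar x)(u)\in\mathbb X$ is the Hessian of $x\mapsto\langle y^*,g(x)\rangle$ at $\bar x$ applied to $u$, $\nabla^2\langle y^*,g\rangle(\bar x)[u,u]$ the associated quadratic form, $\nabla^2 g(\bar x)[u,s]:=(\langle u,\nabla^2g_i(\bar x)s\rangle)_{i=1}^m$ and $\nabla^2g(\bar x)[u,A]:=\{\nabla^2g(\bar x)[u,s]\mid s\in A\}$. $\mathbf T(u):=\mathcal T_{\mathcal T_D(g(\bar x))}(\nabla g(\bar x)u)$ and $w_s(u,0):=\nabla g(\bar x)s+\tfrac12\nabla^2g(\bar x)[u,u]$. *)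

(* X = 'rV[R]_n (Euclidean space, standard inner
   product), R^m = 'rV[R]_m.  Vectors are row vectors. *)
From HB Require Import structures.
From mathcomp Require Import all_boot all_order all_algebra.
From mathcomp Require Import all_classical all_reals all_analysis.
Set Implicit Arguments. Unset Strict Implicit. Unset Printing Implicit Defensive.
Import Order.TTheory GRing.Theory Num.Theory.
Import numFieldNormedType.Exports.
Local Open Scope classical_set_scope.
Local Open Scope ring_scope.

Section Defs.
Variable R : realType.

Definition ip k (a b : 'rV[R]_k) : R := \sum_(i < k) a 0 i * b 0 i.

Definition unit_sphere n (u : 'rV[R]_n) : Prop := ip u u = 1.

Definition evec n (j : 'I_n) : 'rV[R]_n := delta_mx 0 j.

Definition comp n m (g : 'rV[R]_n -> 'rV[R]_m) (i : 'I_m) : 'rV[R]_n -> R :=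
  fun x => g x 0 i.

Definition C2fun n (f : 'rV[R]_n -> R) : Prop :=
  [/\ continuous f,
      (forall v x, derivable f x v),
      (forall v, continuous ('D_v f)),
      (forall v w x, derivable ('D_v f) x w) &
      (forall v w, continuous ('D_w ('D_v f)))].

Definition C2map n m (g : 'rV[R]_n -> 'rV[R]_m) : Prop :=
  forall i, C2fun (comp g i).

Definition jacobian n m (g : 'rV[R]_n -> 'rV[R]_m) (x : 'rV[R]_n) : 'M[R]_(m, n) :=
  \matrix_(i, j) 'D_(evec j) (comp g i) x.

Definition hessian n (f : 'rV[R]_n -> R) (x : 'rV[R]_n) : 'M[R]_n :=
  \matrix_(j, k) 'D_(evec j) ('D_(evec k) f) x.

Definition lapp p q (M : 'M[R]_(p, q)) (v : 'rV[R]_q) : 'rV[R]_p := v *m M^T.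
Definition ladj p q (M : 'M[R]_(p, q)) (y : 'rV[R]_p) : 'rV[R]_q := y *m M.

Definition dg n m (g : 'rV[R]_n -> 'rV[R]_m) x u : 'rV[R]_m := lapp (jacobian g x) u.
Definition dg_adj n m (g : 'rV[R]_n -> 'rV[R]_m) x y : 'rV[R]_n := ladj (jacobian g x) y.

Definition d2yg n m (g : 'rV[R]_n -> 'rV[R]_m) (y : 'rV[R]_m) x (u : 'rV[R]_n)
  : 'rV[R]_n := lapp (hessian (fun z => ip y (g z)) x) u.

Definition d2yg_form n m (g : 'rV[R]_n -> 'rV[R]_m) (y : 'rV[R]_m) x (u : 'rV[R]_n)
  : R := ip u (d2yg g y x u).

Definition d2g n m (g : 'rV[R]_n -> 'rV[R]_m) x (u s : 'rV[R]_n) : 'rV[R]_m :=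
  \row_i ip u (lapp (hessian (comp g i) x) s).

(* (Bouligand) tangent cone of Q at x (empty if x \notin Q) *)
Definition tcone k (Q : set 'rV[R]_k) (x : 'rV[R]_k) : set 'rV[R]_k :=
  [set w | Q x /\ exists (t : nat -> R) (v : nat -> 'rV[R]_k),
     [/\ (forall j, 0 < t j), t @ \oo --> (0 : R), v @ \oo --> w &
         forall j, Q (x + t j *: v j)]].

(* normal cone in the sense of convex analysis (empty if x \notin Q);
   it is only applied to convex sets, where it agrees with the limiting one *)
Definition ncone k (Q : set 'rV[R]_k) (x : 'rV[R]_k) : set 'rV[R]_k :=
  [set y | Q x /\ forall q, Q q -> ip y (q - x) <= 0].

Definition polyhedral k (Q : set 'rV[R]_k) : Prop :=
  exists (p : nat) (a : 'I_p -> 'rV[R]_k) (b : 'I_p -> R),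
    Q = [set y | forall j, ip (a j) y <= b j].

Definition Ccond n m (g : 'rV[R]_n -> 'rV[R]_m) (D : set 'rV[R]_m) xb u y z : Prop :=
  [/\ dg_adj g xb y = 0,
      d2yg g y xb u + dg_adj g xb z = 0,
      ncone D (g xb) y &
      ncone D (g xb) z].

Definition w_s n m (g : 'rV[R]_n -> 'rV[R]_m) xb u s : 'rV[R]_m :=
  dg g xb s + 2^-1 *: d2g g xb u u.

Definition bT n m (g : 'rV[R]_n -> 'rV[R]_m) (D : set 'rV[R]_m) xb u : set 'rV[R]_m :=
  tcone (tcone D (g xb)) (dg g xb u).

End Defs.

From Pilot Require Import Defs.
From HB Require Import structures.
From mathcomp Require Import all_boot all_order all_algebra.
From mathcomp Require Import all_classical all_reals all_analysis.
From mathcomp Require Import ring lra.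
Import Order.TTheory GRing.Theory Num.Theory.
Import numFieldNormedType.Exports.
Local Open Scope classical_set_scope.
Local Open Scope ring_scope.
Set Implicit Arguments. Unset Strict Implicit. Unset Printing Implicit Defensive.

(* Since D = {y | a_j . y <= b_j} is polyhedral, its tangent cone at g xb is cut
   out by the active constraints and its normal cone is generated by the active
   a_j (Farkas), and likewise one level down for T(u).  Symmetry of the Hessians
   makes y |-> nabla^2<y,g>(xb)u the adjoint of s |-> nabla^2 g(xb)[u,s], so all
   conditions concern linear maps and polyhedral cones, and (i) is the Farkas
   alternative for the system defining the 2-regularity set.  If C(u,y,z), then
   <y, nabla^2 g(xb)[u,u]> = -<z, nabla g(xb)u> >= 0: this puts y in the normal
   cone to T_D(g xb) at nabla g(xb)u and reduces Gfrerer's argmax to a sign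
   condition, while LP duality yields an s for which z can be replaced by a
   multiplier complementary to w_s(u,0).  For a polyhedral cone K and
   A^* y = 0, every tangent direction to K at y agrees with an element of K
   modulo ker A^*, so the two variants of (ii) and (iii) coincide. *)

Section InnerProduct.
Variables (R : realType) (k : nat).
Implicit Types a b c : 'rV[R]_k.

Lemma ipE a b : ip a b = (a *m b^T) 0 0.
Proof. by rewrite /ip mxE; apply: eq_bigr => j _; rewrite mxE. Qed.

Lemma ip_sym a b : ip a b = ip b a.
Proof. by rewrite !ipE -[b *m _]trmxK trmx_mul trmxK [RHS]mxE. Qed.

Lemma ipDl a b c : ip (a + b) c = ip a c + ip b c.
Proof. by rewrite !ipE mulmxDl mxE. Qed.

Lemma ipZl r a b : ip (r *: a) b = r * ip a b.
Proof. by rewrite !ipE -scalemxAl mxE. Qed.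

Lemma ip0l b : ip 0 b = 0.
Proof. by rewrite ipE mul0mx mxE. Qed.

Lemma ipNl a b : ip (- a) b = - ip a b.
Proof. by rewrite -scaleN1r ipZl mulN1r. Qed.

Lemma ipBl a b c : ip (a - b) c = ip a c - ip b c.
Proof. by rewrite ipDl ipNl. Qed.

Lemma ipDr a b c : ip a (b + c) = ip a b + ip a c.
Proof. by rewrite ip_sym ipDl !(ip_sym a). Qed.

Lemma ipZr r a b : ip a (r *: b) = r * ip a b.
Proof. by rewrite ip_sym ipZl ip_sym. Qed.

Lemma ip0r a : ip a 0 = 0.
Proof. by rewrite ip_sym ip0l. Qed.

Lemma ipNr a b : ip a (- b) = - ip a b.
Proof. by rewrite ip_sym ipNl ip_sym. Qed.

Lemma ipBr a b c : ip a (b - c) = ip a b - ip a c.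
Proof. by rewrite ip_sym ipBl !(ip_sym a). Qed.

Lemma ip_suml (I : finType) (lam : I -> R) (e : I -> 'rV[R]_k) c :
  ip (\sum_i lam i *: e i) c = \sum_i lam i * ip (e i) c.
Proof.
rewrite ipE mulmx_suml summxE; apply: eq_bigr => i _.
by rewrite -scalemxAl mxE ipE.
Qed.

Lemma ip_evec (j : 'I_k) a : ip (evec R j) a = a 0 j.
Proof.
rewrite /ip (bigD1 j) //= big1 ?addr0; first by rewrite mxE !eqxx mul1r.
by move=> i /negPf ij; rewrite mxE ij andbF mul0r.
Qed.

Lemma ipxx_ge0 a : 0 <= ip a a.
Proof. by rewrite /ip sumr_ge0 // => i _; rewrite -expr2 sqr_ge0. Qed.

Lemma ipxx_le0 a : ip a a <= 0 -> a = 0.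
Proof.
move=> a_le0; apply/rowP => j; rewrite mxE; apply/eqP; rewrite -sqrf_eq0.
have /eqP : ip a a = 0 by apply/eqP; rewrite eq_le a_le0 ipxx_ge0.
rewrite psumr_eq0 => [/allP /(_ j (mem_index_enum j)) //|i _].
by rewrite -expr2 sqr_ge0.
Qed.

Lemma ipxx_gt0 a : a != 0 -> 0 < ip a a.
Proof.
move=> a0; rewrite lt_neqAle ipxx_ge0 andbT eq_sym.
by apply: contra a0 => /eqP aa0; rewrite (ipxx_le0 (a := a)) ?aa0.
Qed.

Lemma ip_inj a b : (forall c, ip a c = ip b c) -> a = b.
Proof. by move=> ab_eq; apply/rowP => j; rewrite -!ip_evec !(ip_sym (evec R j)). Qed.

End InnerProduct.

Lemma ip_ladj (R : realType) m n (M : 'M[R]_(m, n)) y s :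
  ip (ladj M y) s = ip y (lapp M s).
Proof. by rewrite !ipE /ladj /lapp trmx_mul trmxK mulmxA. Qed.

Lemma ip_row_mx (R : realType) k l (a c : 'rV[R]_k) (b d : 'rV[R]_l) :
  ip (row_mx a b) (row_mx c d) = ip a c + ip b d.
Proof.
rewrite /ip big_split_ord /=.
by congr (_ + _); apply: eq_bigr => i _; rewrite ?row_mxEl ?row_mxEr.
Qed.

Lemma ladj_comb (R : realType) m n (M : 'M[R]_(m, n)) (I : finType)
    (lam : I -> R) (e : I -> 'rV[R]_m) :
  ladj M (\sum_i lam i *: e i) = \sum_i lam i *: ladj M (e i).
Proof. by rewrite /ladj mulmx_suml; apply: eq_bigr => i _; rewrite scalemxAl. Qed.

Definition cone (R : realType) k (I : finType) (e : I -> 'rV[R]_k) : set 'rV[R]_k :=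
  [set v | exists2 lam : I -> R, (forall i, 0 <= lam i) & v = \sum_i lam i *: e i].

Definition hpoly (R : realType) k (I : finType) (a : I -> 'rV[R]_k) (b : I -> R) :
    set 'rV[R]_k :=
  [set v | forall i, ip (a i) v <= b i].

Local Notation hcone a := (hpoly a (fun=> 0)).

Section Farkas.
Variable R : realType.
Implicit Types (k : nat).

Lemma farkas_seq k (I : eqType) (r : seq I) (a : I -> 'rV[R]_k) c : uniq r ->
  (exists2 lam : I -> R, (forall i, 0 <= lam i) & c = \sum_(i <- r) lam i *: a i) \/
  (exists2 w, (forall i, i \in r -> ip (a i) w <= 0) & 0 < ip c w).
Proof.
elim: r a c => [|i0 r IH] a c /=.
  have [->|c0] := eqVneq c 0; first by left; exists (fun=> 0); rewrite ?big_nil.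
  by right; exists c; rewrite ?ipxx_gt0.
case/andP=> i0r uniq_r.
pose upd (lam : I -> R) t i := if i == i0 then t else lam i.
have sum_upd lam t : \sum_(i <- i0 :: r) upd lam t i *: a i =
    t *: a i0 + \sum_(i <- r) lam i *: a i.
  rewrite big_cons /upd eqxx; congr (_ + _); apply: eq_big_seq => i ir.
  by case: eqP ir => // ->; rewrite (negPf i0r).
have [[lam lam_ge0 ->]|[w w_le0 cw_gt0]] := IH a c uniq_r.
  left; exists (upd lam 0); first by move=> i; rewrite /upd; case: eqP.
  by rewrite sum_upd scale0r add0r.
have [a0w_le0|a0w_gt0] := lerP (ip (a i0) w) 0.
  by right; exists w => // i; rewrite inE => /predU1P[->|/w_le0].
(* project along [a i0] onto the hyperplane orthogonal to [w] *)
pose be := ip (a i0) w.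
pose P v := v - (ip v w / be) *: a i0.
have [[mu mu_ge0 Pc]|[w' Pa_le0 Pc_gt0]] := IH (P \o a) (P c) uniq_r.
  left; pose t := (ip c w - \sum_(i <- r) mu i * ip (a i) w) / be.
  exists (upd mu t).
    move=> i; rewrite /upd; case: eqP => // _; rewrite divr_ge0 ?(ltW a0w_gt0) //.
    rewrite subr_ge0 (le_trans _ (ltW cw_gt0)) // big_seq.
    by rewrite sumr_le0 // => j jr; rewrite mulr_ge0_le0 ?w_le0.
  rewrite sum_upd -[c](subrK ((ip c w / be) *: a i0)) -/(P c) Pc /t.
  rewrite (eq_bigr (fun i => mu i *: a i - (mu i * ip (a i) w / be) *: a i0));
    last by move=> i _; rewrite scalerBr scalerA mulrA.
  rewrite sumrB -scaler_suml -mulr_suml mulrBl scalerBl.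
  by rewrite [RHS]addrC addrA addrAC.
right; exists (w' - (ip (a i0) w' / be) *: w).
  have proj v : ip v (w' - (ip (a i0) w' / be) *: w) = ip (P v) w'.
    by rewrite ipBr ipZr ipBl ipZl; congr (_ - _); ring.
  move=> i; rewrite inE => /predU1P[->|ir]; last by rewrite proj; exact: Pa_le0.
  by rewrite ipBr ipZr divfK ?subrr // gt_eqF.
rewrite ipBr ipZr (_ : _ * ip c w = ip c w / be * ip (a i0) w') //; last by ring.
by move: Pc_gt0; rewrite /P ipBl ipZl.
Qed.

Lemma farkas k (I : finType) (a : I -> 'rV[R]_k) c :
  cone a c \/ exists2 w, hcone a w & 0 < ip c w.
Proof.
have [[lam]|[w w_le0]] := farkas_seq a c (index_enum_uniq I); first by left; exists lam.
by right; exists w => // i; apply: w_le0; rewrite mem_index_enum.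
Qed.

(* Homogenize: [x] solves the system iff [row_mx x (-1)] is in the polar of
   the cone generated by the [row_mx (G i) (b i)]; apply Farkas to the target
   [row_mx 0 (-1)]. *)
Lemma farkas_ineq k (I : finType) (G : I -> 'rV[R]_k) (b : I -> R) :
  (exists x, hpoly G b x) \/
  exists2 lam : I -> R, (forall i, 0 <= lam i) &
    \sum_i lam i *: G i = 0 /\ \sum_i lam i * b i < 0.
Proof.
pose a i : 'rV[R]_(k + 1) := row_mx (G i) (const_mx (b i)).
pose c : 'rV[R]_(k + 1) := row_mx 0 (const_mx (-1)).
have ip1 (r : R) (t : 'rV[R]_1) : ip (const_mx r) t = r * t 0 0.
  by rewrite /ip big_ord1 mxE.
have [[lam lam_ge0 c_lam]|[w w_le0 cw_gt0]] := farkas a c.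
  right; exists lam => //; split.
    apply: ip_inj => x; rewrite ip_suml ip0l.
    have := congr1 (fun v => ip v (row_mx x 0)) c_lam; rewrite /= ip_suml.
    rewrite /c ip_row_mx ip0l ip0r add0r => {2}->; apply: eq_bigr => i _.
    by rewrite /a /= ip_row_mx ip0r addr0.
  have := congr1 (fun v => ip v (row_mx 0 (const_mx 1))) c_lam; rewrite /= ip_suml.
  rewrite /c ip_row_mx ip0l add0r ip1 mxE mulr1.
  rewrite (eq_bigr (fun i => lam i * b i)) => [<-|i _]; first by rewrite ltrN10.
  by rewrite /a /= ip_row_mx ip0r add0r ip1 mxE mulr1.
left; rewrite -(hsubmxK w) in w_le0 cw_gt0.
move: cw_gt0; rewrite /c ip_row_mx ip0l add0r ip1 mulN1r => tau_gt0.
exists ((- rsubmx w 0 0)^-1 *: lsubmx w) => i.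
rewrite ipZr mulrC ler_pdivrMr // mulrN.
by have := w_le0 i; rewrite /a /= ip_row_mx ip1; lra.
Qed.

Lemma weak_duality k (I : finType) (a : I -> 'rV[R]_k) b (lam : I -> R) x :
  hpoly a b x -> (forall i, 0 <= lam i) ->
  ip (\sum_i lam i *: a i) x <= \sum_i lam i * b i.
Proof. by move=> x_in lam_ge0; rewrite ip_suml ler_sum // => i _; rewrite ler_wpM2l. Qed.

End Farkas.

Section LPDuality.
Variables (R : realType) (p k : nat).
Variables (a : 'I_p -> 'rV[R]_k) (b : 'I_p -> R) (c : 'rV[R]_k).

Lemma lp_gap_ge0 (mp : 'I_p -> R) (pi : 'rV[R]_k) (th : R) :
  (exists x, hpoly a b x) -> cone a c ->
  (forall i, 0 <= mp i) -> 0 <= th -> \sum_i mp i *: a i = th *: c ->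
  (forall j, 0 <= ip (a j) pi + th * b j) ->
  0 <= \sum_i mp i * b i + ip c pi.
Proof.
move=> [x0 x0_in] [lam0 lam0_ge0 c_lam0] mp_ge0 th_ge0 mp_a pi_a.
have [th0|th_neq0] := eqVneq th 0.
  have : 0 <= \sum_i mp i * b i.
    by apply: le_trans (weak_duality x0_in mp_ge0); rewrite mp_a th0 scale0r ip0l.
  have : 0 <= ip c pi.
    rewrite c_lam0 ip_suml sumr_ge0 // => i _; rewrite mulr_ge0 //.
    by have := pi_a i; rewrite th0 mul0r addr0.
  lra.
(* otherwise [- pi / th] is primal feasible and weak duality applies to it *)
have th_gt0 : 0 < th by rewrite lt_neqAle eq_sym th_neq0.
have : ip (\sum_i mp i *: a i) (- th^-1 *: pi) <= \sum_i mp i * b i.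
  apply: weak_duality mp_ge0 => j; rewrite ipZr mulNr -mulrN ler_pdivrMl //.
  by have := pi_a j; lra.
by rewrite mp_a ipZl ipZr mulNr mulrN mulrA mulfV ?gt_eqF // mul1r; lra.
Qed.

(* The joint primal-dual system in [row_mx x l]: primal feasibility of [x],
   [l >= 0], [\sum_i l_i a_i = c] (two inequalities per coordinate) and a
   nonpositive duality gap. *)
Let lp_index := ('I_p + 'I_p + 'I_k + 'I_k + 'I_1)%type.
Let comb (l : 'rV[R]_p) := \sum_i l 0 i *: a i.
Let col (j : 'I_k) : 'rV[R]_p := \row_i a i 0 j.

Let G (i : lp_index) : 'rV[R]_(k + p) :=
  match i with
  | inl (inl (inl (inl i))) => row_mx (a i) 0
  | inl (inl (inl (inr i))) => row_mx 0 (- evec R i)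
  | inl (inl (inr j)) => row_mx 0 (col j)
  | inl (inr j) => row_mx 0 (- col j)
  | inr _ => row_mx (- c) (\row_i b i)
  end.

Let h (i : lp_index) : R :=
  match i with
  | inl (inl (inl (inl i))) => b i
  | inl (inl (inl (inr _))) => 0
  | inl (inl (inr j)) => c 0 j
  | inl (inr j) => - c 0 j
  | inr _ => 0
  end.

Let ip_col j l : ip (col j) l = comb l 0 j.
Proof. by rewrite /ip summxE; apply: eq_bigr => i _; rewrite !mxE mulrC. Qed.

Let ip_b l : ip (\row_i b i) l = \sum_i l 0 i * b i.
Proof. by apply: eq_bigr => i _; rewrite mxE mulrC. Qed.

Lemma lp_system_sol X : hpoly G h X ->
  exists x (lam : 'I_p -> R), [/\ hpoly a b x, (forall i, 0 <= lam i),
    c = \sum_i lam i *: a i & ip c x = \sum_i lam i * b i].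
Proof.
rewrite -(hsubmxK X); set x := lsubmx X; set l := rsubmx X => X_in.
have x_in : hpoly a b x.
  by move=> i; have := X_in (inl (inl (inl (inl i)))); rewrite /= ip_row_mx ip0l addr0.
have l_ge0 i : 0 <= l 0 i.
  have := X_in (inl (inl (inl (inr i)))).
  by rewrite /= ip_row_mx ip0l add0r ipNl ip_evec oppr_le0.
have c_l : c = comb l.
  apply/rowP => j; apply/eqP; rewrite eq_le.
  have := X_in (inl (inl (inr j))); have := X_in (inl (inr j)).
  by rewrite /= !ip_row_mx !ip0l !add0r ipNl ip_col lerN2 => -> ->.
exists x, (fun i => l 0 i); split => //; apply/eqP; rewrite eq_le.
rewrite {1}c_l weak_duality //=.
by have := X_in (inr ord0); rewrite /= ip_row_mx ipNl ip_b; lra.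
Qed.

Section Certificate.
Variable mu : lp_index -> R.
Let mp i := mu (inl (inl (inl (inl i)))).
Let mn i := mu (inl (inl (inl (inr i)))).
Let pi := \row_j (mu (inl (inl (inr j))) - mu (inl (inr j))).
Let th := mu (inr ord0).

Let ip_pi v : ip v pi = \sum_j mu (inl (inl (inr j))) * v 0 j
                        + \sum_j mu (inl (inr j)) * - v 0 j.
Proof. by rewrite /ip -big_split; apply: eq_bigr => j _; rewrite /pi mxE /=; ring. Qed.

Lemma ip_lp_system x l : ip (\sum_i mu i *: G i) (row_mx x l) =
  \sum_i mp i * ip (a i) x - th * ip c x + \sum_i l 0 i * ip (a i) pi
  + th * \sum_i l 0 i * b i - \sum_i l 0 i * mn i.
Proof.
rewrite ip_suml !big_sumType big_ord1 /=.
have -> : \sum_i l 0 i * ip (a i) pi = ip (comb l) pi by rewrite ip_suml.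
rewrite ip_pi.
have -> : \sum_i mu (inl (inl (inl (inl i)))) * ip (row_mx (a i) 0) (row_mx x l)
    = \sum_i mp i * ip (a i) x.
  by apply: eq_bigr => i _; rewrite ip_row_mx ip0l addr0.
have -> : \sum_i mu (inl (inl (inl (inr i)))) * ip (row_mx 0 (- evec R i)) (row_mx x l)
    = - \sum_i l 0 i * mn i.
  rewrite -sumrN; apply: eq_bigr => i _.
  by rewrite ip_row_mx ip0l add0r ipNl ip_evec mulrN mulrC.
have -> : \sum_j mu (inl (inl (inr j))) * ip (row_mx 0 (col j)) (row_mx x l)
    = \sum_j mu (inl (inl (inr j))) * comb l 0 j.
  by apply: eq_bigr => j _; rewrite ip_row_mx ip0l add0r ip_col.
have -> : \sum_j mu (inl (inr j)) * ip (row_mx 0 (- col j)) (row_mx x l)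
    = \sum_j mu (inl (inr j)) * - comb l 0 j.
  by apply: eq_bigr => j _; rewrite ip_row_mx ip0l add0r ipNl ip_col.
by rewrite ip_row_mx ipNl ip_b -/th; ring.
Qed.

Lemma lp_no_certificate : (exists x, hpoly a b x) -> cone a c ->
  (forall i, 0 <= mu i) -> \sum_i mu i *: G i = 0 -> 0 <= \sum_i mu i * h i.
Proof.
move=> feas dual mu_ge0 muG0.
have pairing (x : 'rV[R]_k) (l : 'rV[R]_p) : \sum_i mp i * ip (a i) x - th * ip c x
    + \sum_i l 0 i * ip (a i) pi + th * \sum_i l 0 i * b i - \sum_i l 0 i * mn i = 0.
  by rewrite -ip_lp_system muG0 ip0l.
have mp_a : \sum_i mp i *: a i = th *: c.
  have sum0 (F : 'I_p -> R) : \sum_i (0 : 'rV[R]_p) 0 i * F i = 0.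
    by rewrite big1 // => i _; rewrite mxE mul0r.
  apply: ip_inj => x; have := pairing x 0.
  by rewrite ip_suml ipZl !sum0 mulr0; lra.
have mn_eq j : mn j = ip (a j) pi + th * b j.
  have evecE (F : 'I_p -> R) : \sum_i evec R j 0 i * F i = F j.
    rewrite (bigD1 j) //= mxE !eqxx mul1r big1 ?addr0 // => i /negPf ij.
    by rewrite mxE ij andbF mul0r.
  have := pairing 0 (evec R j); rewrite !evecE big1 => [|i _]; last by rewrite ip0r mulr0.
  by rewrite ip0r mulr0; lra.
have -> : \sum_i mu i * h i = \sum_i mp i * b i + ip c pi.
  rewrite !big_sumType big_ord1 /= ip_pi mulr0 addr0.
  have -> : \sum_i mu (inl (inl (inl (inr i)))) * 0 = 0.
    by rewrite big1 // => i _; rewrite mulr0.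
  by rewrite addr0 addrA.
apply: lp_gap_ge0 feas dual _ (mu_ge0 _) mp_a _ => [i|j]; first exact: mu_ge0.
by rewrite -mn_eq; exact: mu_ge0.
Qed.

End Certificate.

Lemma lp_duality : (exists x, hpoly a b x) -> cone a c ->
  exists x (lam : 'I_p -> R), [/\ hpoly a b x, (forall i, 0 <= lam i),
    c = \sum_i lam i *: a i & ip c x = \sum_i lam i * b i].
Proof.
move=> feas dual; have [[X /lp_system_sol //]|[mu mu_ge0 [muG0]]] := farkas_ineq G h.
by rewrite ltNge lp_no_certificate.
Qed.

End LPDuality.

Section Cones.
Variable R : realType.
Implicit Types (k : nat).

Lemma ip_le0_cvg k (p : 'rV[R]_k) (v_ : nat -> 'rV[R]_k) w :
  v_ @ \oo --> w -> (forall j, ip p (v_ j) <= 0) -> ip p w <= 0.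
Proof.
move=> v_w v_le0.
have ip_cvg : (fun j => ip p (v_ j)) @ \oo --> ip p w.
  apply: (@cvg_big R^o _ +%R 0 xpredT add_continuous) => i _; apply: cvgMl_tmp.
  exact: (cvg_comp _ _ v_w (@coord_continuous _ _ _ 0 i w)).
by apply: (closed_cvg [set r : R | r <= 0] (@closed_le R 0) _ _ ip_cvg); exact: nearW.
Qed.

Lemma tcone_segment k (Q : set 'rV[R]_k) x v (t0 : R) : Q x -> 0 < t0 ->
  (forall t, 0 < t <= t0 -> Q (x + t *: v)) -> tcone Q x v.
Proof.
move=> Qx t0_gt0 Qseg; split => //.
exists (fun j => t0 * harmonic j), (fun=> v); split.
- by move=> j; rewrite mulr_gt0 // harmonic_gt0.
- by rewrite -(mulr0 t0); apply: cvgMl_tmp; exact: cvg_harmonic.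
- exact: cvg_cst.
move=> j; apply: Qseg; rewrite mulr_gt0 ?harmonic_gt0 //= ler_piMr ?(ltW t0_gt0) //.
by rewrite /harmonic /= invf_le1 ?ler1n ?ltr0n.
Qed.

Lemma ncone_tcone_le0 k (Q : set 'rV[R]_k) x y v :
  ncone Q x y -> tcone Q x v -> ip y v <= 0.
Proof.
move=> [_ y_normal] [_ [t [v_ [t_gt0 _ v_cvg Q_v]]]].
apply: (ip_le0_cvg v_cvg) => j.
by have := y_normal _ (Q_v j); rewrite addrC addKr ipZr pmulr_rle0.
Qed.

Lemma ncone_orth k (K : set 'rV[R]_k) w z :
  K w -> (forall q, K q -> ip z q <= 0) -> ip z w = 0 -> ncone K w z.
Proof. by move=> Kw z_polar zw0; split => // q Kq; rewrite ipBr zw0 subr0 z_polar. Qed.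

Lemma cone0 k (I : finType) (e : I -> 'rV[R]_k) : cone e 0.
Proof. by exists (fun=> 0) => //; rewrite big1 // => i _; rewrite scale0r. Qed.

Lemma coneDZ k (I : finType) (e : I -> 'rV[R]_k) y z t :
  cone e y -> cone e z -> 0 <= t -> cone e (y + t *: z).
Proof.
move=> [ly ly_ge0 ->] [lz lz_ge0 ->] t_ge0.
exists (fun i => ly i + t * lz i) => [i|]; first by rewrite addr_ge0 ?mulr_ge0.
rewrite scaler_sumr -big_split; apply: eq_bigr => i _.
by rewrite scalerDl scalerA.
Qed.

Lemma tcone_cone k (I : finType) (e : I -> 'rV[R]_k) y z :
  cone e y -> cone e z -> tcone (cone e) y z.
Proof.
move=> ey ez; apply: (@tcone_segment _ _ _ _ 1) => // t /andP[t_gt0 _].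
exact: coneDZ (ltW t_gt0).
Qed.

(* Farkas for the generators [ladj M \o e]: a separating [w] gives the vector
   [lapp M w], which is nonpositive on [cone e] and orthogonal to [y], hence
   nonpositive on the tangent directions at [y]. *)
Lemma tcone_cone_ladj k l (I : finType) (e : I -> 'rV[R]_k) (M : 'M[R]_(k, l)) y z :
  ladj M y = 0 -> tcone (cone e) y z ->
  exists2 z', cone e z' & ladj M z' = ladj M z.
Proof.
move=> My0 [_ [t [v_ [t_gt0 _ v_cvg e_v]]]].
have [[lam lam_ge0 Mz]|[w Me_le0 Mz_gt0]] := farkas (ladj M \o e) (ladj M z).
  by exists (\sum_i lam i *: e i); [exists lam | rewrite Mz ladj_comb].
suff : ip (ladj M z) w <= 0 by rewrite leNgt Mz_gt0.
have polar_q q : cone e q -> ip q (lapp M w) <= 0.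
  move=> [lam lam_ge0 ->]; rewrite ip_suml sumr_le0 // => i _.
  by rewrite mulr_ge0_le0 // -ip_ladj; exact: Me_le0.
rewrite ip_ladj ip_sym; apply: (ip_le0_cvg v_cvg) => j.
have := polar_q _ (e_v j); rewrite ipDl -ip_ladj My0 ip0l add0r ipZl.
by rewrite pmulr_rle0 // ip_sym.
Qed.

End Cones.

Section Polyhedra.
Variables (R : realType) (k : nat) (I : finType).
Implicit Types (a : I -> 'rV[R]_k) (b : I -> R).

Definition active a b x : I -> 'rV[R]_k :=
  fun i => if ip (a i) x == b i then a i else 0.

Lemma hpoly_segment a b x v : hpoly a b x -> hcone (active a b x) v ->
  exists2 t0, 0 < t0 & forall t, 0 < t <= t0 -> hpoly a b (x + t *: v).
Proof.
move=> x_in v_in.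
pose bound i := if 0 < ip (a i) v then (b i - ip (a i) x) / ip (a i) v else 1.
have bound_gt0 i : 0 < bound i.
  rewrite /bound; case: ifPn => // av_gt0; rewrite divr_gt0 // subr_gt0.
  rewrite lt_neqAle x_in andbT; apply: contraTneq av_gt0 => act.
  by have := v_in i; rewrite /active act eqxx /= -leNgt.
exists (\big[Num.min/1]_i bound i) => [|t /andP[t_gt0 t_le] i].
  by rewrite lt_bigmin // => i _; exact: bound_gt0.
have := le_trans t_le (bigmin_le _ i bound); rewrite ipDr ipZr /bound.
case: ifPn => [av_gt0|]; first by rewrite ler_pdivlMr //; lra.
rewrite -leNgt => av_le0 _; have := x_in i.
have : t * ip (a i) v <= 0 by rewrite pmulr_rle0.
lra.
Qed.

Lemma tcone_hpoly a b x : hpoly a b x -> tcone (hpoly a b) x = hcone (active a b x).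
Proof.
move=> x_in; apply/seteqP; split => v.
  move=> [_ [t [v_ [t_gt0 _ v_cvg v_in]]]] i /=; rewrite /active.
  case: eqP => [act|_]; last by rewrite ip0l.
  apply: (ip_le0_cvg v_cvg) => j; rewrite -(pmulr_rle0 _ (t_gt0 j)).
  by have := v_in j i; rewrite ipDr ipZr act; lra.
move=> v_in; have [t0 t0_gt0 seg] := hpoly_segment x_in v_in.
exact: tcone_segment x_in t0_gt0 seg.
Qed.

Lemma ncone_hpoly a b x : hpoly a b x -> ncone (hpoly a b) x = cone (active a b x).
Proof.
move=> x_in; apply/seteqP; split => z.
  move=> [_ z_normal]; have [//|[w w_in zw_gt0]] := farkas (active a b x) z.
  have [t0 t0_gt0 seg] := hpoly_segment x_in w_in.
  have := z_normal _ (seg t0 _); rewrite t0_gt0 lexx addrC addKr ipZr.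
  by rewrite pmulr_rle0 // leNgt zw_gt0 => /(_ isT).
move=> [lam lam_ge0 ->]; split => // q q_in; rewrite ip_suml sumr_le0 // => i _.
rewrite mulr_ge0_le0 // /active; case: eqP => [act|_]; last by rewrite ip0l.
by rewrite ipBr act subr_le0; exact: q_in.
Qed.

Lemma ip_cone_hcone a z q : cone a z -> hcone a q -> ip z q <= 0.
Proof.
move=> [lam lam_ge0 ->] q_in; rewrite ip_suml sumr_le0 // => i _.
by rewrite mulr_ge0_le0 //; exact: q_in.
Qed.

Lemma cone_active_sub a b x : cone (active a b x) `<=` cone a.
Proof.
move=> z [lam lam_ge0 ->].
exists (fun i => if ip (a i) x == b i then lam i else 0) => [i|]; first by case: ifP.
by apply: eq_bigr => i _; rewrite /active; case: ifP; rewrite ?scaler0 ?scale0r.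
Qed.

Lemma ip_cone_active a w z : cone (active a (fun=> 0) w) z -> ip z w = 0.
Proof.
move=> [lam _ ->]; rewrite ip_suml big1 // => i _.
by rewrite /active /=; case: eqP => [->|_]; rewrite ?ip0l mulr0.
Qed.

Lemma cone_active_orth a w z :
  hcone a w -> cone a z -> ip z w = 0 -> cone (active a (fun=> 0) w) z.
Proof.
move=> w_in [lam lam_ge0 zE] zw0.
have term0 i : lam i * ip (a i) w = 0.
  apply/eqP; rewrite eq_le mulr_ge0_le0 ?w_in //=.
  have := zw0; rewrite zE ip_suml (bigD1 i) //= => sum0.
  have : \sum_(j | j != i) lam j * ip (a j) w <= 0.
    by rewrite sumr_le0 // => j _; rewrite mulr_ge0_le0 ?w_in.
  lra.
exists lam => //; rewrite zE; apply: eq_bigr => i _; rewrite /active.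
case: eqP => // aw_ne0; have /eqP := term0 i.
by rewrite mulf_eq0 => /orP[/eqP->|/eqP/aw_ne0//]; rewrite !scale0r.
Qed.

End Polyhedra.

Section Schwarz.
Variables (R : realType) (n : nat).
Implicit Types (F : 'rV[R]_n -> R) (p v w x : 'rV[R]_n).

Lemma is_derive_line F p v (t : R) : derivable F (p + t *: v) v ->
  is_derive t 1 (fun s : R => F (p + s *: v)) ('D_v F (p + t *: v)).
Proof.
have quotE : (fun h : R => h^-1 *: (((fun s : R => F (p + s *: v)) \o shift t) (h *: 1)
      - F (p + t *: v))) =
    (fun h : R => h^-1 *: ((F \o shift (p + t *: v)) (h *: v) - F (p + t *: v))).
  apply/funext => h /=; congr (_ *: (F _ - _)).
  by rewrite /shift /= [_%:A]mulr1 scalerDl addrCA.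
by move=> dF; apply: DeriveDef; rewrite /derivable /derive quotE.
Qed.

Lemma mvt_derive (f df : R -> R) (h : R) : 0 < h ->
  (forall s : R, is_derive s (1 : R) f (df s)) ->
  exists2 c, c \in `]0, h[%R & f h - f 0 = df c * h.
Proof.
move=> h_gt0 f_df; have f_cont : {within `[0, h], continuous f}.
  exact: derivable_within_continuous (fun s _ => @ex_derive _ _ _ _ _ _ _ (f_df s)).
by have [c c_in ->] := MVT h_gt0 (fun s _ => f_df s) f_cont; exists c; rewrite ?subr0.
Qed.

Lemma mvt_line F p v (h : R) : 0 < h -> (forall y, derivable F y v) ->
  exists2 c, c \in `]0, h[%R & F (p + h *: v) - F p = 'D_v F (p + c *: v) * h.
Proof.
move=> h_gt0 dF.
have [c c_in] := mvt_derive h_gt0 (fun s => is_derive_line (dF (p + s *: v))).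
by rewrite scale0r addr0 => E; exists c.
Qed.

Lemma mvt_line2 F p q v (h : R) : 0 < h -> (forall y, derivable F y v) ->
  exists2 c, c \in `]0, h[%R &
  (F (q + h *: v) - F (p + h *: v)) - (F q - F p) =
  ('D_v F (q + c *: v) - 'D_v F (p + c *: v)) * h.
Proof.
move=> h_gt0 dF.
have [c c_in] := mvt_derive (f := fun s => F (q + s *: v) - F (p + s *: v)) h_gt0
  (fun s => is_deriveB (is_derive_line (dF _)) (is_derive_line (dF _))).
by rewrite !scale0r !addr0 => E; exists c.
Qed.

Definition second_diff F v w x (h : R) :=
  F (x + h *: v + h *: w) - F (x + h *: v) - F (x + h *: w) + F x.

Lemma second_diffC F v w x h : second_diff F v w x h = second_diff F w v x h.
Proof. by rewrite /second_diff [x + h *: v + _]addrAC; ring. Qed.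

Lemma second_diff_mvt F v w x (h : R) : 0 < h ->
  (forall y, derivable F y v) -> (forall y, derivable ('D_v F) y w) ->
  exists xi eta, [/\ 0 < xi < h, 0 < eta < h &
    second_diff F v w x h = 'D_w ('D_v F) (x + xi *: v + eta *: w) * (h * h)].
Proof.
move=> h_gt0 dF dDF.
have [xi xi_in Exi] := mvt_line2 x (x + h *: w) h_gt0 dF.
have [eta eta_in Eeta] := mvt_line (x + xi *: v) h_gt0 dDF.
exists xi, eta; rewrite !in_itv /= in xi_in eta_in; split => //.
have -> : second_diff F v w x h =
    (F (x + h *: w + h *: v) - F (x + h *: v)) - (F (x + h *: w) - F x).
  by rewrite /second_diff [x + h *: v + _]addrAC; ring.
by rewrite Exi [x + h *: w + _]addrAC Eeta mulrA.
Qed.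

Lemma near_square (g : 'rV[R]_n -> R) x v w (e : R) : {for x, continuous g} ->
  0 < e -> exists2 h, 0 < h & forall xi eta, 0 < xi < h -> 0 < eta < h ->
    `|g x - g (x + xi *: v + eta *: w)| < e.
Proof.
move=> g_cont e_gt0.
have /nbhs_normP[d /= d_gt0 g_near] : \forall y \near x, `|g x - g y| < e.
  by apply: (@cvgr_dist_lt _ _ _ _ _ g (g x) g_cont e e_gt0); typeclasses eauto.
pose K := `|v| + `|w| + 1.
have K_gt0 : 0 < K by rewrite ltr_pwDr // addr_ge0.
exists (d / K) => [|xi eta /andP[xi_gt0 xi_lt] /andP[eta_gt0 eta_lt]].
  by rewrite divr_gt0.
apply: g_near; rewrite /ball_ /= -addrA opprD addNKr normrN.
rewrite (le_lt_trans (ler_normD _ _)) // !normrZ !gtr0_norm //.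
have -> : d = d / K * K by rewrite divfK // gt_eqF.
have : 0 < d / K by rewrite divr_gt0.
by have := normr_ge0 v; have := normr_ge0 w; rewrite /K; nra.
Qed.

Lemma schwarz F : C2fun F -> forall v w x, 'D_w ('D_v F) x = 'D_v ('D_w F) x.
Proof.
move=> [_ dF _ dDF cDDF] v w x.
suff close e : 0 < e -> `|'D_w ('D_v F) x - 'D_v ('D_w F) x| < e + e.
  apply/eqP/negPn/negP => D_ne; have := close (`|'D_w ('D_v F) x - 'D_v ('D_w F) x| / 2).
  by rewrite -splitr ltxx divr_gt0 ?normr_gt0 ?subr_eq0 // => /(_ isT).
move=> e_gt0.
have [h1 h1_gt0 near1] := near_square v w (cDDF v w x) e_gt0.
have [h2 h2_gt0 near2] := near_square w v (cDDF w v x) e_gt0.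
pose h := Num.min h1 h2.
have h_gt0 : 0 < h by rewrite lt_min h1_gt0.
have lt_h1 t : 0 < t < h -> 0 < t < h1.
  by case/andP=> -> /lt_le_trans; apply; rewrite ge_min lexx.
have lt_h2 t : 0 < t < h -> 0 < t < h2.
  by case/andP=> -> /lt_le_trans; apply; rewrite ge_min lexx orbT.
have [xi [eta [xi_in eta_in E1]]] := second_diff_mvt x h_gt0 (dF v) (dDF v w).
have [xi' [eta' [xi'_in eta'_in E2]]] := second_diff_mvt x h_gt0 (dF w) (dDF w v).
have hh_ne0 : h * h != 0 by rewrite mulf_neq0 // gt_eqF.
move: E1; rewrite second_diffC E2 => /(mulIf hh_ne0) E.
have -> : 'D_w ('D_v F) x - 'D_v ('D_w F) x =
    ('D_w ('D_v F) x - 'D_w ('D_v F) (x + xi *: v + eta *: w))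
    - ('D_v ('D_w F) x - 'D_v ('D_w F) (x + xi' *: w + eta' *: v)).
  by rewrite E opprB addrA subrK.
apply: le_lt_trans (ler_normB _ _) _; apply: ltrD.
  exact: near1 (lt_h1 _ xi_in) (lt_h1 _ eta_in).
exact: near2 (lt_h2 _ xi'_in) (lt_h2 _ eta'_in).
Qed.

End Schwarz.

Section Hessian.
Variables (R : realType) (n m : nat) (g : 'rV[R]_n -> 'rV[R]_m).
Hypothesis g_C2 : C2map g.

Lemma derive_ip_comp y v :
  'D_v (fun z => ip y (g z)) = \sum_i y 0 i \*: 'D_v (Defs.comp g i).
Proof.
have -> : (fun z => ip y (g z)) = \sum_i y 0 i \*: Defs.comp g i.
  by apply/funext => z; rewrite fct_sumE.
apply/funext => z; rewrite derive_sum => [|i]; last first.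
  by apply: derivableZ; have [_ dg _ _ _] := g_C2 i; exact: dg.
rewrite fct_sumE; apply: eq_bigr => i _; rewrite deriveZ //.
by have [_ dg _ _ _] := g_C2 i; exact: dg.
Qed.

Lemma hessian_ip y x :
  hessian (fun z => ip y (g z)) x = \sum_i y 0 i *: hessian (Defs.comp g i) x.
Proof.
apply/matrixP => j k; rewrite summxE !mxE derive_ip_comp derive_sum => [|i]; last first.
  by apply: derivableZ; have [_ _ _ dDg _] := g_C2 i; exact: dDg.
apply: eq_bigr => i _; rewrite deriveZ ?mxE //.
by have [_ _ _ dDg _] := g_C2 i; exact: dDg.
Qed.

Lemma hessian_sym i x : (hessian (Defs.comp g i) x)^T = hessian (Defs.comp g i) x.
Proof. by apply/matrixP => j k; rewrite !mxE schwarz. Qed.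

Lemma ip_d2yg y x u s : ip (d2yg g y x u) s = ip y (d2g g x u s).
Proof.
rewrite /d2yg /lapp hessian_ip linear_sum /= mulmx_sumr.
under eq_bigr do rewrite linearZ /= hessian_sym -scalemxAr.
rewrite ip_suml [RHS]/ip; apply: eq_bigr => i _.
by rewrite mxE -ip_ladj.
Qed.

End Hessian.

Section Multipliers.
Variables (R : realType) (m n : nat) (M : 'M[R]_(m, n)) (D2 : 'rV[R]_m -> 'rV[R]_n).

(* The conditions of (ii) and (iii) are [multiplier_free K (fun=> K)] and
   [multiplier_free K (tcone K)] for the appropriate normal cone [K]. *)
Definition multiplier_free (K : set 'rV[R]_m) (Z : 'rV[R]_m -> set 'rV[R]_m) :=
  forall y z, ladj M y = 0 -> D2 y + ladj M z = 0 -> K y -> Z y z -> y = 0.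

Lemma multiplier_free_tcone (I : finType) (e : I -> 'rV[R]_m) :
  multiplier_free (cone e) (tcone (cone e)) <->
  multiplier_free (cone e) (fun=> cone e).
Proof.
split=> free y z My0 yz0 ey ez; first exact: free (tcone_cone ey ez).
have [z' ez' Mz'] := tcone_cone_ladj My0 ez.
by apply: free My0 _ ey ez'; rewrite Mz'.
Qed.

Lemma multiplier_free_tcone_hpoly (I : finType) (a : I -> 'rV[R]_m) b w :
  multiplier_free (ncone (hpoly a b) w) (tcone (ncone (hpoly a b) w)) <->
  multiplier_free (ncone (hpoly a b) w) (fun=> ncone (hpoly a b) w).
Proof.
have [w_in|w_out] := pselect (hpoly a b w).
  by rewrite ncone_hpoly //; exact: multiplier_free_tcone.
by split=> _ y z _ _ [].
Qed.

End Multipliers.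

Section SecondOrderConditions.
Variables (R : realType) (m n p : nat).
Variables (a : 'I_p -> 'rV[R]_m) (b : 'I_p -> R) (x : 'rV[R]_m).
Variables (M : 'M[R]_(m, n)) (B : 'rV[R]_n -> 'rV[R]_m) (D2 : 'rV[R]_m -> 'rV[R]_n).
Variable u : 'rV[R]_n.
Hypothesis x_in : hpoly a b x.
Hypothesis D2_adj : forall y s, ip (D2 y) s = ip y (B s).
Hypothesis w0_in : tcone (hpoly a b) x (lapp M u).

(* [M], [B] and [D2] stand for the Jacobian of [g] at [xb], for
   [s |-> d2g g xb u s] and for [y |-> d2yg g y xb u]; the active constraints
   [a0] and [a1] describe T_D(g xb) and T(u). *)
Local Notation D := (hpoly a b).
Local Notation adj := (ladj M).
Local Notation w0 := (lapp M u).
Local Notation a0 := (active a b x).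
Local Notation a1 := (active a0 (fun=> 0) w0).
Local Notation ws s := (lapp M s + 2^-1 *: B u).
Local Notation C y z := [/\ adj y = 0, D2 y + adj z = 0, ncone D x y & ncone D x z].

Lemma tcone_D : tcone D x = hcone a0. Proof. exact: tcone_hpoly. Qed.

Lemma ncone_D : ncone D x = cone a0. Proof. exact: ncone_hpoly. Qed.

Lemma w0_in_hcone : hcone a0 w0. Proof. by rewrite -tcone_D. Qed.

Lemma ncone_T : ncone (tcone D x) w0 = cone a1.
Proof. by rewrite tcone_D (ncone_hpoly w0_in_hcone). Qed.

Lemma tcone_T : tcone (tcone D x) w0 = hcone a1.
Proof. by rewrite tcone_D (tcone_hpoly w0_in_hcone). Qed.

Lemma ip_w0_ker y : adj y = 0 -> ip y w0 = 0.
Proof. by rewrite -ip_ladj => ->; rewrite ip0l. Qed.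

Lemma ip_ws_ker y s : adj y = 0 -> ip y (ws s) = 2^-1 * ip y (B u).
Proof. by move=> My0; rewrite ipDr -ip_ladj My0 ip0l add0r ipZr. Qed.

Lemma ip_Bu y z : D2 y + adj z = 0 -> ip y (B u) = - ip z w0.
Proof.
move=> /(congr1 (fun v => ip v u)); rewrite /= ipDl D2_adj ip_ladj ip0l.
by move/eqP; rewrite addr_eq0 => /eqP.
Qed.

Lemma C_Bu_ge0 y z : C y z -> 0 <= ip y (B u).
Proof. by case=> _ yz0 _ Nz; rewrite (ip_Bu yz0) oppr_ge0 (ncone_tcone_le0 Nz). Qed.

Lemma C_cone_a1 y z : C y z -> cone a1 y.
Proof.
case=> My0 _ Ny _; apply: cone_active_orth w0_in_hcone _ (ip_w0_ker My0).
by rewrite -ncone_D.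
Qed.

Local Notation S := [set c | exists a' s t, tcone D x (lapp M s) /\ tcone D x t /\
  c = lapp M a' + B s - t].

Lemma multiplier_free_of_regular : S = setT -> forall y z, C y z -> y = 0.
Proof.
move=> S_full y z [My0 yz0 Ny Nz].
have : S (- y) by rewrite S_full.
case=> a' [s [t [Ts [Tt yE]]]]; apply: ipxx_le0.
have := congr1 (ip y) yE; rewrite ipNr ipBr ipDr -ip_ladj My0 ip0l add0r -D2_adj.
have -> : D2 y = - adj z by apply/eqP; rewrite -addr_eq0 yz0.
rewrite ipNl ip_ladj => E.
have := ncone_tcone_le0 Nz Ts; have := ncone_tcone_le0 Ny Tt; lra.
Qed.

(* [c] lies in [S] iff the linear system below in [row_mx a' s] is solvable; a
   Farkas certificate against it is a pair of multipliers [(y, z)] with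
   [C y z] and [0 < ip y c]. *)
Lemma regular_of_multiplier_free : (forall y z, C y z -> y = 0) -> S = setT.
Proof.
move=> free; rewrite tcone_D; apply/seteqP; split => // c _.
pose G (i : 'I_p + 'I_p) : 'rV[R]_(n + n) := match i with
  | inl j => row_mx (adj (a0 j)) (D2 (a0 j)) | inr j => row_mx 0 (adj (a0 j)) end.
pose h (i : 'I_p + 'I_p) : R := if i is inl j then ip (a0 j) c else 0.
have G_l j a' s : ip (G (inl j)) (row_mx a' s) = ip (a0 j) (lapp M a' + B s).
  by rewrite /= ip_row_mx ip_ladj D2_adj ipDr.
have G_r j a' s : ip (G (inr j)) (row_mx a' s) = ip (a0 j) (lapp M s).
  by rewrite /= ip_row_mx ip0l add0r ip_ladj.
have [[X X_in]|[lam lam_ge0 [lamG0 lamh_lt0]]] := farkas_ineq G h.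
  rewrite -(hsubmxK X) in X_in.
  exists (lsubmx X), (rsubmx X), (lapp M (lsubmx X) + B (rsubmx X) - c).
  split; [|split; last by rewrite opprB addrC subrK].
    by move=> j; have := X_in (inr j); rewrite G_r.
  by move=> j; have := X_in (inl j); rewrite G_l /= ipBr subr_le0.
exfalso; pose y := \sum_j lam (inl j) *: a0 j; pose z := \sum_j lam (inr j) *: a0 j.
have pair a' s : ip y (lapp M a' + B s) + ip z (lapp M s) = 0.
  transitivity (ip (\sum_i lam i *: G i) (row_mx a' s)); last by rewrite lamG0 ip0l.
  rewrite ip_suml big_sumType /y /z !ip_suml.
  by congr (_ + _); apply: eq_bigr => j _; rewrite ?G_l ?G_r.
have My0 : adj y = 0.
  apply: ip_inj => a'; have := pair a' 0.
  by rewrite ip_ladj ipDr -D2_adj !ip0r /lapp mul0mx ip0r !addr0 ip0l.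
have yz0 : D2 y + adj z = 0.
  apply: ip_inj => s; have := pair 0 s.
  by rewrite ipDl D2_adj ip_ladj /lapp mul0mx add0r ip0l.
have y0 : y = 0.
  apply: (free y z); split => //; rewrite ncone_D.
    by exists (lam \o inl) => // j; exact: lam_ge0.
  by exists (lam \o inr) => // j; exact: lam_ge0.
move: lamh_lt0; rewrite big_sumType /= -ip_suml -/y y0 ip0l add0r.
by rewrite big1 ?ltxx // => j _; rewrite mulr0.
Qed.

Lemma regularity_iff : S = setT <-> (forall y z, C y z -> y = 0).
Proof.
by split; [exact: multiplier_free_of_regular | exact: regular_of_multiplier_free].
Qed.

Lemma orth_multiplier_iff :
  multiplier_free M D2 (ncone (tcone D x) w0) (fun=> ncone (tcone D x) w0) <->
  (forall y z, C y z -> ip z w0 = 0 -> y = 0).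
Proof.
rewrite ncone_T; split=> free y z.
  move=> Cyz zw0; have [My0 yz0 _ Nz] := Cyz.
  apply: free My0 yz0 (C_cone_a1 Cyz) _.
  by apply: cone_active_orth w0_in_hcone _ zw0; rewrite -ncone_D.
move=> My0 yz0 y_a1 z_a1; apply: free (ip_cone_active z_a1).
split => //; rewrite ncone_D; first exact: cone_active_sub y_a1.
exact: cone_active_sub z_a1.
Qed.

Lemma orth_multiplier_tcone_iff :
  multiplier_free M D2 (ncone (tcone D x) w0) (tcone (ncone (tcone D x) w0)) <->
  (forall y z, C y z -> ip z w0 = 0 -> y = 0).
Proof.
by rewrite tcone_D multiplier_free_tcone_hpoly -tcone_D; exact: orth_multiplier_iff.
Qed.

Lemma gfrerer_iff :
  (forall y z, C y z ->
     (ncone D x y /\ adj y = 0 /\ forall yh, ncone D x yh -> adj yh = 0 ->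
        2^-1 * ip u (D2 yh) <= 2^-1 * ip u (D2 y)) -> y = 0) <->
  (forall y z s, C y z -> tcone (tcone D x) w0 (ws s) -> y = 0).
Proof.
rewrite tcone_T; split=> [gfrerer y z s Cyz ws_in|free y z Cyz [_ [_ y_max]]].
  apply: (gfrerer y z Cyz); have [My0 _ Ny _] := Cyz; split=> //; split=> // yh Nyh Myh.
  rewrite ler_wpM2l ?invr_ge0 ?ler0n // !(ip_sym u) !D2_adj.
  rewrite (le_trans _ (C_Bu_ge0 Cyz)) //.
  have yh_a1 : cone a1 yh.
    by apply: cone_active_orth w0_in_hcone _ (ip_w0_ker Myh); rewrite -ncone_D.
  by have := ip_cone_hcone yh_a1 ws_in; rewrite ip_ws_ker // pmulr_rle0 ?invr_gt0.
(* either some [ws s] lies in [hcone a1], or a Farkas certificate [yh] makes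
   the quadratic form unbounded above on the cone of multipliers *)
pose d := 2^-1 *: B u.
have [[s s_in]|[lam lam_ge0 [lamM0 lamd_gt0]]] :=
  farkas_ineq (fun j => adj (a1 j)) (fun j => - ip (a1 j) d).
  apply: (free y z s Cyz) => j; have := s_in j; rewrite /= ipDr -ip_ladj; lra.
exfalso; pose yh := \sum_j lam j *: a1 j.
have Myh : adj yh = 0 by rewrite ladj_comb.
have yh_Bu : 0 < ip yh (B u).
  move: lamd_gt0; under eq_bigr do rewrite mulrN.
  rewrite sumrN oppr_lt0 -ip_suml -/yh /d ipZr.
  by rewrite pmulr_rgt0 // invr_gt0.
pose t := (`|ip y (B u)| + 1) / ip yh (B u).
have Ntyh : ncone D x (t *: yh).
  rewrite ncone_D -[_ *: _]add0r; apply: coneDZ (cone0 _) _ _.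
    by apply: cone_active_sub; exists lam.
  by rewrite divr_ge0 ?addr_ge0 // ltW.
have Mtyh : adj (t *: yh) = 0.
  by move: Myh; rewrite /ladj -scalemxAl => ->; rewrite scaler0.
have := y_max _ Ntyh Mtyh.
rewrite ler_pM2l ?invr_gt0 // !(ip_sym u) !D2_adj ipZl divfK ?gt_eqF //.
by have := ler_norm (ip y (B u)); lra.
Qed.

Lemma C_Bu_eq0 y z s : C y z -> hcone a1 (ws s) -> ip y (B u) = 0.
Proof.
move=> Cyz ws_in; apply/eqP; rewrite eq_le (C_Bu_ge0 Cyz) andbT.
have := ip_cone_hcone (C_cone_a1 Cyz) ws_in.
by rewrite ip_ws_ker ?pmulr_rle0 ?invr_gt0 //; case: Cyz.
Qed.

(* LP duality for [max {ip (adj z) s | ws s \in hcone a1}] and its dual over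
   the multipliers [z'] in [cone a1] with [adj z' = adj z]. *)
Lemma complementary_multiplier y z s0 : C y z -> hcone a1 (ws s0) ->
  exists s z', [/\ hcone a1 (ws s), cone a1 z', adj z' = adj z & ip z' (ws s) = 0].
Proof.
move=> Cyz ws0_in; have [_ yz0 _ Nz] := Cyz.
have z_a1 : cone a1 z.
  apply: cone_active_orth w0_in_hcone _ _; first by rewrite -ncone_D.
  by apply/eqP; rewrite -oppr_eq0 -(ip_Bu yz0) (C_Bu_eq0 Cyz ws0_in).
pose d := 2^-1 *: B u.
have ws_inE s : hcone a1 (ws s) <-> hpoly (fun j => adj (a1 j)) (fun j => - ip (a1 j) d) s.
  by split=> s_in j; have := s_in j; rewrite /= ipDr -ip_ladj; lra.
have [|s [lam [s_in lam_ge0 Mz gap]]] :=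
    lp_duality (c := adj z) (ex_intro _ s0 ((ws_inE s0).1 ws0_in)).
  by case: z_a1 => nu nu_ge0 ->; exists nu; rewrite // ladj_comb.
exists s, (\sum_j lam j *: a1 j); split; first exact/ws_inE.
- by exists lam.
- by rewrite ladj_comb Mz.
rewrite ipDr -ip_ladj ladj_comb -Mz gap ip_suml -big_split big1 // => j _ /=.
by rewrite mulrN addNr.
Qed.

Lemma ws_multiplier_iff :
  (forall s, multiplier_free M D2 (ncone (tcone (tcone D x) w0) (ws s))
                                 (fun=> ncone (tcone (tcone D x) w0) (ws s))) <->
  (forall y z s, C y z -> tcone (tcone D x) w0 (ws s) -> y = 0).
Proof.
rewrite tcone_T; split=> [free y z s0 Cyz ws0_in|free s y z My0 yz0 Ny Nz].
  have [s [z' [ws_in z'_a1 Mz' z'ws0]]] := complementary_multiplier Cyz ws0_in.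
  have [My0 yz0 _ _] := Cyz.
  apply: (free s y z' My0); first by rewrite Mz'.
    apply: ncone_orth ws_in (fun q => ip_cone_hcone (C_cone_a1 Cyz)) _.
    by rewrite ip_ws_ker // (C_Bu_eq0 Cyz ws0_in) mulr0.
  exact: ncone_orth ws_in (fun q => ip_cone_hcone z'_a1) z'ws0.
have ws_in : hcone a1 (ws s) by case: Ny.
rewrite (ncone_hpoly ws_in) in Ny Nz.
apply: (free y z s) ws_in; split => //; rewrite ncone_D.
  exact: cone_active_sub (cone_active_sub Ny).
exact: cone_active_sub (cone_active_sub Nz).
Qed.

Lemma ws_multiplier_tcone_iff :
  (forall s, multiplier_free M D2 (ncone (tcone (tcone D x) w0) (ws s))
                                 (tcone (ncone (tcone (tcone D x) w0) (ws s)))) <->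
  (forall y z s, C y z -> tcone (tcone D x) w0 (ws s) -> y = 0).
Proof.
apply: iff_trans ws_multiplier_iff; rewrite tcone_T.
by split=> free s; apply/multiplier_free_tcone_hpoly; exact: free.
Qed.

End SecondOrderConditions.

Unset Implicit Arguments.

Theorem proposition3p11 (R : realType) (n m : nat)
  (g : 'rV[R]_n -> 'rV[R]_m) (D : set 'rV[R]_m) (xb u : 'rV[R]_n) :
  C2map g -> polyhedral D -> D (g xb) -> unit_sphere u ->
  tcone D (g xb) (dg g xb u) ->
  (* (i) *)
  ([set y | exists a s t, tcone D (g xb) (dg g xb s) /\ tcone D (g xb) t /\
       y = dg g xb a + d2g g xb u s - t] = setT
   <-> (forall y z, Ccond g D xb u y z -> y = 0))
  (* (ii), first variant *)
  /\ ((forall y z, dg_adj g xb y = 0 -> d2yg g y xb u + dg_adj g xb z = 0 ->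
         ncone (tcone D (g xb)) (dg g xb u) y ->
         ncone (tcone D (g xb)) (dg g xb u) z -> y = 0)
      <-> (forall y z, Ccond g D xb u y z -> ip z (dg g xb u) = 0 -> y = 0))
  (* (ii), second variant *)
  /\ ((forall y z, dg_adj g xb y = 0 -> d2yg g y xb u + dg_adj g xb z = 0 ->
         ncone (tcone D (g xb)) (dg g xb u) y ->
         tcone (ncone (tcone D (g xb)) (dg g xb u)) y z -> y = 0)
      <-> (forall y z, Ccond g D xb u y z -> ip z (dg g xb u) = 0 -> y = 0))
  (* (iii), Gfrerer's condition *)
  /\ ((forall y z, Ccond g D xb u y z ->
         (ncone D (g xb) y /\ dg_adj g xb y = 0 /\
          forall yh, ncone D (g xb) yh -> dg_adj g xb yh = 0 ->
            2^-1 * d2yg_form g yh xb u <= 2^-1 * d2yg_form g y xb u) ->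
         y = 0)
      <-> (forall y z s, Ccond g D xb u y z -> bT g D xb u (w_s g xb u s) -> y = 0))
  (* (iii), first variant of the second condition *)
  /\ ((forall s y z, dg_adj g xb y = 0 -> d2yg g y xb u + dg_adj g xb z = 0 ->
         ncone (bT g D xb u) (w_s g xb u s) y ->
         ncone (bT g D xb u) (w_s g xb u s) z -> y = 0)
      <-> (forall y z s, Ccond g D xb u y z -> bT g D xb u (w_s g xb u s) -> y = 0))
  (* (iii), second variant of the second condition *)
  /\ ((forall s y z, dg_adj g xb y = 0 -> d2yg g y xb u + dg_adj g xb z = 0 ->
         ncone (bT g D xb u) (w_s g xb u s) y ->
         tcone (ncone (bT g D xb u) (w_s g xb u s)) y z -> y = 0)
      <-> (forall y z s, Ccond g D xb u y z -> bT g D xb u (w_s g xb u s) -> y = 0)).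
Proof.
move=> g_C2 [p [a [b ->]]]; rewrite -/(hpoly a b) => x_in _ w0_in.
have D2_adj y s : ip (d2yg g y xb u) s = ip y (d2g g xb u s) by exact: ip_d2yg.
split; first exact (regularity_iff (Defs.jacobian g xb) x_in D2_adj).
split; first exact (orth_multiplier_iff (fun y => d2yg g y xb u) x_in w0_in).
split; first exact (orth_multiplier_tcone_iff (fun y => d2yg g y xb u) x_in w0_in).
split; first exact (gfrerer_iff x_in D2_adj w0_in).
split; first exact (ws_multiplier_iff x_in D2_adj w0_in).
exact (ws_multiplier_tcone_iff x_in D2_adj w0_in).
Qed.
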